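(* Let $A$ be a latin square of order $n$ on symbols $\{0,\dots,n-1\}$ with $k$ pairwise disjoint transversals $T_0,\dots,T_{k-1}$, and let $C$ be a latin square of order $k$ on the symbol set $\{n,\dots,n+k-1\}$ with rows and columns indexed by $\{n,\dots,n+k-1\}$. Define $\widehat{A}_k\subseteq\{0,\dots,n+k-1\}^3$ as follows: every $(a,b,c)\in A\setminus\bigcup_{i=0}^{k-1}T_i$ belongs to $\widehat{A}_k$; for each $i$ and each $(a,b,c)\in T_i$, the triples $(a,b,n+i)$, $(a,n+i,c)$, $(n+i,b,c)$ belong to $\widehat{A}_k$; and every entry $(r,s,u)$ of $C$ belongs to $\widehat{A}_k$. Then $\widehat{A}_k$ is a latin square of order $n+k$ and $$t(\widehat{A}_k)\ \ge\ t(C)\cdot t(A;T_0,\dots,T_{k-1}).$$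
   Context: A latin square of order $m$ on a symbol set $Y$ with $|Y|=m$ is identified with a set of ordered triples $(r,c,s)$ meaning symbol $s$ is in row $r$, column $c$, such that each row and each column contains each symbol exactly once. A transversal is a set of $m$ entries containing exactly one entry from each row and each column, with no symbol repeated. $t(B)$ denotes the number of transversals of a latin square $B$, and $t(A;T_0,\dots,T_{k-1})$ denotes the number of transversals of $A$ that are disjoint from each of $T_0,\dots,T_{k-1}$. *)

From mathcomp Require Import all_boot.
Set Implicit Arguments. Unset Strict Implicit. Unset Printing Implicit Defensive.

Definition triple (N : nat) := ('I_N * 'I_N * 'I_N)%type.

Definition trow N (x : triple N) : 'I_N := x.1.1.
Definition tcol N (x : triple N) : 'I_N := x.1.2.
Definition tsym N (x : triple N) : 'I_N := x.2.

Definition latin_on N (Y : {set 'I_N}) (L : {set triple N}) : Prop :=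
  [/\ (forall x, x \in L -> [/\ trow x \in Y, tcol x \in Y & tsym x \in Y]),
      (forall r c, r \in Y -> c \in Y -> exists! s, ((r, c), s) \in L),
      (forall r s, r \in Y -> s \in Y -> exists! c, ((r, c), s) \in L) &
      (forall c s, c \in Y -> s \in Y -> exists! r, ((r, c), s) \in L)].

Definition latin_transversal N (Y : {set 'I_N}) (L : {set triple N}) (S : {set triple N}) : bool :=
  [&& S \subset L, #|S| == #|Y| &
      [forall x in S, forall y in S, (x != y) ==>
         [&& trow x != trow y, tcol x != tcol y & tsym x != tsym y]]].

Definition num_transversals N (Y : {set 'I_N}) (L : {set triple N}) : nat :=
  #|[set S : {set triple N} | latin_transversal Y L S]|.

Definition num_transversals_avoiding N k (Y : {set 'I_N}) (L : {set triple N})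
    (T : 'I_k -> {set triple N}) : nat :=
  #|[set S : {set triple N} | latin_transversal Y L S && [forall i, [disjoint S & T i]]]|.

Definition lowY n k : {set 'I_(n + k)} := [set i : 'I_(n + k) | i < n].
Definition highY n k : {set 'I_(n + k)} := [set i : 'I_(n + k) | n <= i].

Definition shiftk n k (i : 'I_k) : 'I_(n + k) := rshift n i.

Definition Ahat n k (A : {set triple (n + k)}) (T : 'I_k -> {set triple (n + k)})
    (C : {set triple (n + k)}) : {set triple (n + k)} :=
  [set x : triple (n + k) |
     [|| (x \in A) && [forall i, x \notin T i],
         [exists i : 'I_k, exists y in T i,
            [|| x == ((trow y, tcol y), shiftk n i),
                x == ((trow y, shiftk n i), tsym y) |
                x == ((shiftk n i, tcol y), tsym y)]] |
         x \in C]].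

From mathcomp Require Import all_boot zify.
Set Implicit Arguments. Unset Strict Implicit. Unset Printing Implicit Defensive.

(* Call a coordinate low when it is < n.  The three parts of Ahat are
   distinguished by their number of low coordinates: A minus the T_i (three),
   the entries spread out of the T_i (two) and C (none).  A cell with low row
   and column keeps the symbol of A unless that entry lies in the (unique) T_i
   containing it, in which case it gets n+i; a cell with row or column n+i
   gets its symbol from the unique entry of T_i in that column or row.  The
   construction commutes with rotating the coordinates (r,c,s) -> (s,r,c),
   so the row and column axioms are the cell axiom for rotated data.  For the
   count, a transversal of C and a transversal of A avoiding all T_i are
   disjoint in every coordinate, so their union is a transversal of Ahat, from
   which both are recovered by splitting at row n. *)
Lemma eq_ex_unique (X : Type) (P Q : X -> Prop) :
  (forall x, P x <-> Q x) -> (exists! x, P x) -> exists! x, Q x.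
Proof.
move=> PQ [x [Px Px_uniq]]; exists x; split; first exact/PQ.
by move=> y /PQ; apply: Px_uniq.
Qed.

Lemma disjoint_preimset (aT rT : finType) (f : aT -> rT) (A B : {set rT}) :
  [disjoint A & B] -> [disjoint f @^-1: A & f @^-1: B].
Proof. by rewrite -!setI_eq0 -preimsetI => /eqP ->; rewrite preimset0. Qed.

Section LatinTransversals.
Variable N : nat.
Implicit Types (x y : triple N) (Y : {set 'I_N}) (L S : {set triple N}).

Definition apart x y := [&& trow x != trow y, tcol x != tcol y & tsym x != tsym y].

(* Under preimage by [rotate], the cell, row-symbol and column-symbol axioms
   of a latin square are permuted cyclically. *)
Definition rotate x : triple N := ((tsym x, trow x), tcol x).
Definition unrotate x : triple N := ((tcol x, tsym x), trow x).

Lemma rotateK : cancel rotate unrotate. Proof. by case=> [[]]. Qed.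

Lemma unrotateK : cancel unrotate rotate. Proof. by case=> [[]]. Qed.

Lemma rotate_inj : injective rotate. Proof. exact: can_inj rotateK. Qed.

Lemma apart_rotate x y : apart (rotate x) (rotate y) = apart x y.
Proof. by rewrite /apart /= andbC andbA. Qed.

Lemma latin_rotate Y L : latin_on Y L -> latin_on Y (rotate @^-1: L).
Proof.
case=> hL cell row col; split.
- by move=> x; rewrite inE => /hL [].
- by move=> r c rY cY; apply: eq_ex_unique (col r c rY cY) => s; rewrite inE.
- by move=> r s rY sY; apply: eq_ex_unique (cell s r sY rY) => c; rewrite inE.
- by move=> c s cY sY; apply: eq_ex_unique (row s c sY cY) => r; rewrite inE.
Qed.

Lemma transversal_apart Y L S x y : latin_transversal Y L S ->
  x \in S -> y \in S -> x != y -> apart x y.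
Proof.
case/and3P=> _ _ /forall_inP hS xS yS; move/forall_inP/(_ y yS): (hS x xS).
exact/implyP.
Qed.

Lemma latin_transversal_sub Y L S : latin_transversal Y L S -> S \subset L.
Proof. by case/and3P. Qed.

Lemma apart_sym x y : apart x y = apart y x.
Proof. by rewrite /apart eq_sym [tcol x == _]eq_sym [tsym x == _]eq_sym. Qed.

Lemma transversal_rotate Y L S : latin_transversal Y L S ->
  latin_transversal Y (rotate @^-1: L) (rotate @^-1: S).
Proof.
move=> hS; case/and3P: (hS) => SL cardS _; apply/and3P; split.
- exact: preimsetS.
- by rewrite card_preimset //; apply: rotate_inj.
apply/forall_inP=> x; rewrite inE => xS; apply/forall_inP=> y; rewrite inE => yS.
apply/implyP=> xy; rewrite -[_ && _]/(apart x y) -apart_rotate.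
by apply: transversal_apart hS xS yS _; rewrite (inj_eq rotate_inj).
Qed.

Lemma transversal_image Y L S (f : triple N -> 'I_N) :
  latin_transversal Y L S -> {in L, forall x, f x \in Y} ->
  (forall x y, apart x y -> f x != f y) -> f @: S = Y.
Proof.
move=> hS fY f_apart; case/and3P: (hS) => /subsetP SL /eqP cardS _.
apply/eqP; rewrite eqEcard; apply/andP; split.
  by apply/subsetP=> _ /imsetP [x xS ->]; apply/fY/SL.
rewrite card_in_imset ?cardS // => x y xS yS; apply: contra_eq => xy.
exact/f_apart/(transversal_apart hS).
Qed.

Lemma transversal_row_sym Y L S r : latin_on Y L -> latin_transversal Y L S ->
  r \in Y -> exists! s, exists c, ((r, c), s) \in S.
Proof.
case=> hL _ _ _ hS rY.
have: r \in [set trow x | x in S].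
  rewrite (transversal_image hS) // => [x /hL [] //|x y]; by case/and3P.
case/imsetP=> -[[r' c] s] xS /= ->; exists s; split; first by exists c.
move=> s' [c' yS]; apply/eqP; apply: contraT => ss'.
have /(transversal_apart hS xS yS) : ((r', c), s) != ((r', c'), s').
  by rewrite !xpair_eqE negb_and orbC ss'.
by rewrite /apart eqxx.
Qed.

Lemma transversal_col_sym Y L S c : latin_on Y L -> latin_transversal Y L S ->
  c \in Y -> exists! s, exists r, ((r, c), s) \in S.
Proof.
case=> hL _ _ _ hS cY.
have: c \in [set tcol x | x in S].
  rewrite (transversal_image hS) // => [x /hL [] //|x y]; by case/and3P.
case/imsetP=> -[[r c'] s] xS /= ->; exists s; split; first by exists r.
move=> s' [r' yS]; apply/eqP; apply: contraT => ss'.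
have /(transversal_apart hS xS yS) : ((r, c'), s) != ((r', c'), s').
  by rewrite !xpair_eqE negb_and orbC ss'.
by rewrite /apart eqxx andbF.
Qed.

Lemma transversal_row_mem Y L S : latin_on Y L -> latin_transversal Y L S ->
  {in S, forall x, trow x \in Y}.
Proof. by case=> hL _ _ _ /latin_transversal_sub /subsetP SL x /SL /hL []. Qed.

Lemma transversal_setU Y1 Y2 L1 L2 L S1 S2 : [disjoint Y1 & Y2] ->
  latin_on Y1 L1 -> latin_on Y2 L2 ->
  latin_transversal Y1 L1 S1 -> latin_transversal Y2 L2 S2 ->
  S1 :|: S2 \subset L -> latin_transversal (Y1 :|: Y2) L (S1 :|: S2).
Proof.
move=> Y12 [hL1 _ _ _] [hL2 _ _ _] hS1 hS2 S12L.
have neq12 a b : a \in Y1 -> b \in Y2 -> a != b.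
  by move=> aY; apply: contraTneq => <-; rewrite (disjointFr Y12 aY).
have apart12 x y : x \in S1 -> y \in S2 -> apart x y.
  move=> /(subsetP (latin_transversal_sub hS1)) /hL1 [r c s].
  move=> /(subsetP (latin_transversal_sub hS2)) /hL2 [r' c' s'].
  by apply/and3P; split; apply: neq12.
have S12 : S1 :&: S2 = set0.
  apply/setP=> x; rewrite !inE; apply/negbTE/andP => -[xS1 xS2].
  by have := apart12 x x xS1 xS2; rewrite /apart eqxx.
have Y12_0 : Y1 :&: Y2 = set0 by apply/disjoint_setI0.
apply/and3P; split=> //.
  case/and3P: hS1 => _ /eqP cardS1 _; case/and3P: hS2 => _ /eqP cardS2 _.
  by rewrite !cardsU S12 Y12_0 !cards0 cardS1 cardS2.
apply/forall_inP=> x /setUP xS; apply/forall_inP=> y /setUP yS; apply/implyP=> xy.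
case: xS yS => [xS1 | xS2] [yS1 | yS2].
- exact: transversal_apart hS1 xS1 yS1 xy.
- exact: apart12.
- by rewrite -[_ && _]/(apart x y) apart_sym; apply: apart12.
- exact: transversal_apart hS2 xS2 yS2 xy.
Qed.

Lemma setU_rowsK Y1 Y2 S1 S2 : [disjoint Y1 & Y2] ->
  {in S1, forall x, trow x \in Y1} -> {in S2, forall x, trow x \in Y2} ->
  [set x in S1 :|: S2 | trow x \in Y1] = S1.
Proof.
move=> Y12 S1Y S2Y; apply/setP=> x; rewrite !inE.
case: (boolP (x \in S1)) => [/S1Y -> // | _] /=.
by apply/negbTE/andP => -[/S2Y rY2 rY1]; rewrite (disjointFr Y12 rY1) in rY2.
Qed.

End LatinTransversals.

Arguments rotate {N} x.

Section Prolongation.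
Variables n k : nat.
Local Notation N := (n + k).
Implicit Types (x y : triple N) (r c s : 'I_N) (i j : 'I_k).
Implicit Types (A C : {set triple N}) (T : 'I_k -> {set triple N}).

Lemma shiftk_ge i : n <= shiftk n i.
Proof. exact: leq_addr. Qed.

Lemma shiftk_inj : injective (@shiftk n k).
Proof. exact: rshift_inj. Qed.

Lemma lowYP r : r < n -> r \in lowY n k.
Proof. by rewrite inE. Qed.

Lemma shiftk_highY i : shiftk n i \in highY n k.
Proof. by rewrite inE shiftk_ge. Qed.

Lemma shiftk_ltnF i : (shiftk n i < n) = false.
Proof. by rewrite ltnNge shiftk_ge. Qed.

Lemma low_neq_shiftk r i : r < n -> (r == shiftk n i) = false.
Proof. by move=> hr; apply: contraTF hr => /eqP ->; rewrite shiftk_ltnF. Qed.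

Variant shiftk_spec : 'I_N -> Type :=
  | ShiftkLow (r : 'I_N) of r < n : shiftk_spec r
  | ShiftkHigh (i : 'I_k) : shiftk_spec (shiftk n i).

Lemma shiftkP r : shiftk_spec r.
Proof.
case: (ltnP r n) => [|le_nr]; first exact: ShiftkLow.
have lt_rk : r - n < k by have := ltn_ord r; lia.
have -> : r = shiftk n (Ordinal lt_rk) by apply: val_inj => /=; lia.
exact: ShiftkHigh.
Qed.

Definition spread i y : {set triple N} :=
  [set ((trow y, tcol y), shiftk n i); ((trow y, shiftk n i), tsym y);
       ((shiftk n i, tcol y), tsym y)].

Lemma mem_Ahat A T C x : (x \in Ahat A T C) =
  [|| (x \in A) && [forall i, x \notin T i],
      [exists i, exists y in T i, x \in spread i y] | x \in C].
Proof.
rewrite inE; congr [|| _, _ | _]; apply: eq_existsb => i.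
by apply/eq_existsb => y; rewrite /spread !inE orbA.
Qed.

Lemma spread_rotate i y : rotate @^-1: spread i (rotate y) = spread i y.
Proof.
case: y => [[a' b'] c']; apply/setP=> [[[a b] c]].
rewrite !inE /rotate /trow /tcol /tsym /= !xpair_eqE.
by do !case: (_ == _).
Qed.

Lemma Ahat_rotate A T C :
  Ahat (rotate @^-1: A) (fun i => rotate @^-1: T i) (rotate @^-1: C) =
  rotate @^-1: Ahat A T C.
Proof.
apply/setP=> x; rewrite [RHS]inE !mem_Ahat !inE; congr [|| _ && _, _ | _].
  by apply: eq_forallb => i; rewrite inE.
apply: eq_existsb => i; apply/existsP/existsP => [[y] | [z /andP [zT xz]]].
  by rewrite inE -spread_rotate inE => yx; exists (rotate y).
by exists (unrotate z); rewrite inE -spread_rotate inE unrotateK zT.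
Qed.

Definition prolongation_data A T C :=
  [/\ latin_on (lowY n k) A, forall i, latin_transversal (lowY n k) A (T i),
      forall i j, i != j -> [disjoint T i & T j] & latin_on (highY n k) C].

Lemma prolongation_data_rotate A T C : prolongation_data A T C ->
  prolongation_data (rotate @^-1: A) (fun i => rotate @^-1: T i) (rotate @^-1: C).
Proof.
case=> hA hT hTT hC; split; try exact: latin_rotate.
- by move=> i; apply: transversal_rotate.
- by move=> i j ij; apply/disjoint_preimset/hTT.
Qed.

Definition low_count x := (trow x < n) + (tcol x < n) + (tsym x < n).

Section Regions.
Variables (A : {set triple N}) (T : 'I_k -> {set triple N}) (C : {set triple N}).
Hypothesis hD : prolongation_data A T C.

Lemma low_of_A x : x \in A -> [/\ trow x < n, tcol x < n & tsym x < n].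
Proof. by case: hD => -[hA _ _ _] _ _ _ /hA []; rewrite !inE. Qed.

Lemma low_count_A x : x \in A -> low_count x = 3.
Proof. by case/low_of_A; rewrite /low_count => -> -> ->. Qed.

Lemma low_count_C x : x \in C -> low_count x = 0.
Proof.
case: hD => _ _ _ [hC _ _ _] /hC []; rewrite !inE /low_count => r c s.
by rewrite !ltnNge r c s.
Qed.

Lemma low_of_T i x : x \in T i -> [/\ trow x < n, tcol x < n & tsym x < n].
Proof.
by case: hD => _ hT _ _ xT; apply/low_of_A/(subsetP _ _ xT); case/and3P: (hT i).
Qed.

Lemma low_count_spread x : [exists i, exists y in T i, x \in spread i y] ->
  low_count x = 2.
Proof.
case/existsP=> i /existsP [y /andP [/low_of_T [r c s]]].
by rewrite !inE -orbA => /or3P [] /eqP ->; rewrite /low_count /= ?r ?c ?s shiftk_ltnF.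
Qed.

Lemma mem_Ahat_A x : low_count x = 3 ->
  (x \in Ahat A T C) = (x \in A) && [forall i, x \notin T i].
Proof.
move=> cnt; rewrite mem_Ahat; apply/idP/idP => [|-> //].
by case/or3P=> [// | /low_count_spread | /low_count_C]; rewrite cnt.
Qed.

Lemma mem_Ahat_spread x : low_count x = 2 ->
  (x \in Ahat A T C) = [exists i, exists y in T i, x \in spread i y].
Proof.
move=> cnt; rewrite mem_Ahat; apply/idP/idP => [|->]; last by rewrite orbT.
by case/or3P=> [/andP [/low_count_A] | // | /low_count_C]; rewrite cnt.
Qed.

Lemma mem_Ahat_C x : low_count x <= 1 -> (x \in Ahat A T C) = (x \in C).
Proof.
move=> cnt; rewrite mem_Ahat; apply/idP/idP => [|->]; last by rewrite !orbT.
by case/or3P=> [/andP [/low_count_A e _] | /low_count_spread e | //]; rewrite e in cnt.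
Qed.

Lemma mem_Ahat_shift_sym r c i : (r < n) || (c < n) ->
  (((r, c), shiftk n i) \in Ahat A T C) = [exists s, ((r, c), s) \in T i].
Proof.
have [/andP [hr hc] _ | not_both hrc] := boolP ((r < n) && (c < n)).
  rewrite mem_Ahat_spread; last by rewrite /low_count /= hr hc shiftk_ltnF.
  apply/existsP/existsP => [[j /existsP [[[r' c'] s] /andP [yT]]] | [s xT]].
    rewrite /spread /trow /tcol /tsym /= !inE !xpair_eqE.
    rewrite (low_neq_shiftk _ hr) (low_neq_shiftk _ hc) (inj_eq shiftk_inj) !andbF !orbF.
    by case/andP=> [/andP [/eqP -> /eqP ->] /eqP ->]; exists s.
  by exists i; apply/existsP; exists ((r, c), s); rewrite xT /spread !inE eqxx.
have one_low : low_count ((r, c), shiftk n i) <= 1.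
  by move: not_both; rewrite /low_count /= shiftk_ltnF; case: (r < n); case: (c < n).
rewrite mem_Ahat_C //; apply/idP/existsP => [/low_count_C | [s /low_of_T [hr hc _]]].
  by move: hrc; rewrite /low_count /= shiftk_ltnF; case: (r < n); case: (c < n).
by rewrite /= hr hc in not_both.
Qed.

End Regions.

Section Cells.
Variables (A : {set triple N}) (T : 'I_k -> {set triple N}) (C : {set triple N}).
Hypothesis hD : prolongation_data A T C.

Lemma mem_Ahat_shift_row r c i : r < n ->
  (((shiftk n i, r), c) \in Ahat A T C) = [exists s, ((s, r), c) \in T i].
Proof.
move=> hr; have := mem_Ahat_shift_sym (prolongation_data_rotate hD) (c := c) i
  (introT orP (or_introl hr)).
by rewrite Ahat_rotate inE /= => ->; apply: eq_existsb => s; rewrite inE.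
Qed.

Lemma mem_Ahat_shift_col r s i : r < n ->
  (((r, shiftk n i), s) \in Ahat A T C) = [exists c, ((r, c), s) \in T i].
Proof.
move=> hr.
have := mem_Ahat_shift_sym (prolongation_data_rotate (prolongation_data_rotate hD))
  (r := s) i (introT orP (or_intror hr)).
by rewrite !Ahat_rotate !inE /= => ->; apply: eq_existsb => c; rewrite !inE.
Qed.

Lemma Ahat_cell_low r c : r < n -> c < n -> exists! s, ((r, c), s) \in Ahat A T C.
Proof.
case: hD => -[hA cellA _ _] hT hTT _ hr hc.
have [s0 [s0A s0_uniq]] := cellA r c (lowYP hr) (lowYP hc).
have T_s0 i s : ((r, c), s) \in T i -> s = s0.
  by move=> sT; apply/esym/s0_uniq/(subsetP _ _ sT); case/and3P: (hT i).
have mem_low s : s < n -> (((r, c), s) \in Ahat A T C) =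
    (((r, c), s) \in A) && [forall i, ((r, c), s) \notin T i].
  by move=> hs; apply: (mem_Ahat_A hD); rewrite /low_count /= hr hc hs.
case: (pickP (fun i => ((r, c), s0) \in T i)) => [i s0T | s0_notT].
  exists (shiftk n i); split.
    by rewrite (mem_Ahat_shift_sym hD) ?hr //; apply/existsP; exists s0.
  move=> s; case: s / (shiftkP s) => [s hs | j].
    by rewrite mem_low // => /andP [/s0_uniq <- /forallP /(_ i)]; rewrite s0T.
  rewrite (mem_Ahat_shift_sym hD) ?hr // => /existsP [s /[dup] /T_s0 -> sT].
  congr shiftk; apply/eqP; apply: contraT => ij.
  by rewrite (disjointFr (hTT i j ij) s0T) in sT.
have s0_low : s0 < n by case/hA: s0A => _ _; rewrite inE.
exists s0; split.
  by rewrite mem_low // s0A; apply/forallP => i; rewrite s0_notT.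
move=> s; case: s / (shiftkP s) => [s hs | j].
  by rewrite mem_low // => /andP [/s0_uniq].
rewrite (mem_Ahat_shift_sym hD) ?hr // => /existsP [s /[dup] /T_s0 ->].
by rewrite s0_notT.
Qed.

Lemma Ahat_cell r c : exists! s, ((r, c), s) \in Ahat A T C.
Proof.
have [hA hT _ [_ cellC _ _]] := hD.
case: r / (shiftkP r) => [r hr | i]; case: c / (shiftkP c) => [c hc | j].
- exact: Ahat_cell_low.
- have := transversal_row_sym hA (hT j) (lowYP hr).
  by apply: eq_ex_unique => s; rewrite mem_Ahat_shift_col //; apply: rwP existsP.
- have := transversal_col_sym hA (hT i) (lowYP hc).
  by apply: eq_ex_unique => s; rewrite mem_Ahat_shift_row //; apply: rwP existsP.
- have := cellC _ _ (shiftk_highY i) (shiftk_highY j).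
  apply: eq_ex_unique => s; rewrite mem_Ahat_C //.
  by rewrite /low_count /= !shiftk_ltnF; case: (s < n).
Qed.

End Cells.

Lemma latin_Ahat A T C : prolongation_data A T C -> latin_on [set: 'I_N] (Ahat A T C).
Proof.
move=> hD; have hD1 := prolongation_data_rotate hD.
have hD2 := prolongation_data_rotate hD1.
split=> [x _ | r c _ _ | r s _ _ | c s _ _]; first by rewrite !inE.
- exact: Ahat_cell.
- have := Ahat_cell hD2 s r; rewrite !Ahat_rotate.
  by apply: eq_ex_unique => c; rewrite !inE.
- have := Ahat_cell hD1 c s; rewrite Ahat_rotate.
  by apply: eq_ex_unique => r; rewrite !inE.
Qed.

Lemma leq_num_transversals_Ahat A T C : prolongation_data A T C ->
  num_transversals (highY n k) C * num_transversals_avoiding (lowY n k) A T <=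
  num_transversals [set: 'I_N] (Ahat A T C).
Proof.
case=> hA _ _ hC.
have Y_disj : [disjoint highY n k & lowY n k].
  by rewrite -setI_eq0; apply/eqP/setP => r; rewrite !inE leqNgt andNb.
have Y_cover : highY n k :|: lowY n k = [set: 'I_N].
  by apply/setP => r; rewrite !inE leqNgt orNb.
rewrite /num_transversals /num_transversals_avoiding -cardsX.
rewrite -(card_in_imset (f := fun S => S.1 :|: S.2)); last first.
  move=> [S1 S2] [S1' S2'] /setXP [S1C S2A] /setXP [S1'C S2'A] /= S12.
  rewrite !inE in S1C S2A S1'C S2'A.
  case/andP: S2A => S2A _; case/andP: S2'A => S2'A _.
  have rowsC := transversal_row_mem hC; have rowsA := transversal_row_mem hA.
  congr pair.
    rewrite -(setU_rowsK Y_disj (rowsC _ S1C) (rowsA _ S2A)) S12.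
    exact: setU_rowsK Y_disj (rowsC _ S1'C) (rowsA _ S2'A).
  rewrite disjoint_sym in Y_disj.
  rewrite -(setU_rowsK Y_disj (rowsA _ S2A) (rowsC _ S1C)) setUC S12 setUC.
  exact: setU_rowsK Y_disj (rowsA _ S2'A) (rowsC _ S1'C).
apply/subset_leq_card/subsetP => S /imsetP [[S1 S2] /setXP [] /[!inE] S1C].
case/andP=> S2A /forallP S2T ->; rewrite -Y_cover.
apply: (transversal_setU Y_disj hC hA S1C S2A).
apply/subsetP=> x; rewrite mem_Ahat => /setUP [xS1 | xS2].
  by rewrite (subsetP (latin_transversal_sub S1C)) ?orbT.
rewrite (subsetP (latin_transversal_sub S2A)) //=; apply/orP; left.
by apply/forallP=> i; rewrite (disjointFr (S2T i) xS2).
Qed.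

End Prolongation.

Theorem mainTheorem4 (n k : nat)
    (A : {set triple (n + k)}) (T : 'I_k -> {set triple (n + k)})
    (C : {set triple (n + k)})
    (hA : latin_on (lowY n k) A)
    (hT : forall i : 'I_k, latin_transversal (lowY n k) A (T i))
    (hTdisj : forall i j : 'I_k, i != j -> [disjoint T i & T j])
    (hC : latin_on (highY n k) C) :
  latin_on [set: 'I_(n + k)] (Ahat A T C) /\
  num_transversals [set: 'I_(n + k)] (Ahat A T C) >=
    num_transversals (highY n k) C * num_transversals_avoiding (lowY n k) A T.
Proof.
have hD : prolongation_data A T C by split.
by split; [apply: latin_Ahat | apply: leq_num_transversals_Ahat].
Qed.
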